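(* Let $f:H\to\mathbb{R}\cup\{+\infty\}$ be proper and lower semicontinuous, and let $(x^k)$ satisfy $\mathbf{H}_1$, $\mathbf{H}_2$, $\mathbf{H}_3$ with $\varepsilon_k=0$ for all $k$. Suppose $(x^k)$ $f$-converges to a point $x^*$ at which $f$ has the K\L{} property with desingularizing function $\varphi$. Set $\tilde\varphi(t):=\max\{\varphi(t),\sqrt t\}$. Then $\|x^*-x^k\|=O\big(\tilde\varphi(f(x^{k-1})-f(x^* ))\big)$ as $k\to\infty$.
   Context: Subdifferential $\partial f$ (limiting Fréchet subdifferential), lazy slope $\|\partial f(x)\|_-=\inf_{p\in\partial f(x)}\|p\|$ ($+\infty$ if $\partial f(x)=\emptyset$), $f$-convergence: $x^k\to x$ strongly and $f(x^k)\to f(x)$. A desingularizing function is a continuous concave $\varphi:[0,\eta[\to[0,+\infty[$ with $\varphi(0)=0$, $C^1$ on $]0,\eta[$ with $\varphi'>0$. $f$ has the K\L{} property at $x^*$ with desingularizing $\varphi$ if there is $\delta>0$ with $\varphi'(f(x)-f(x^* ))\|\partial f(x)\|_-\ge1$ for all $x$ with $\|x-x^*\|<\delta$ and $f(x^* )<f(x)<f(x^* )+\eta$. $\mathbf{H}_1$: $f(x^{k+1})+a_k\|x^{k+1}-x^k\|^2\le f(x^k)$, $a_k>0$. $\mathbf{H}_2$: $b_{k+1}\|\partial f(x^{k+1})\|_-\le\|x^{k+1}-x^k\|+\varepsilon_{k+1}$, $b_{k+1}>0$. $\mathbf{H}_3$: (i) $a_k\ge\underline a>0$; (ii) $(b_k)\notin\ell^1$;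 (iii) $\sup_{k\ge1}\frac1{a_kb_k}<\infty$; (iv) $(\varepsilon_k)\in\ell^1$. *)

From Stdlib Require Import Reals Lra.
Open Scope R_scope.

Record Hilbert := {
  hcar :> Type;
  hzero : hcar;
  hadd : hcar -> hcar -> hcar;
  hopp : hcar -> hcar;
  hscal : R -> hcar -> hcar;
  hinner : hcar -> hcar -> R;
  hadd_assoc : forall x y z, hadd x (hadd y z) = hadd (hadd x y) z;
  hadd_comm : forall x y, hadd x y = hadd y x;
  hadd_zero : forall x, hadd x hzero = x;
  hadd_opp : forall x, hadd x (hopp x) = hzero;
  hscal_one : forall x, hscal 1 x = x;
  hscal_assoc : forall a b x, hscal a (hscal b x) = hscal (a * b) x;
  hscal_distr_l : forall a x y, hscal a (hadd x y) = hadd (hscal a x) (hscal a y);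
  hscal_distr_r : forall a b x, hscal (a + b) x = hadd (hscal a x) (hscal b x);
  hinner_sym : forall x y, hinner x y = hinner y x;
  hinner_add : forall x y z, hinner (hadd x y) z = hinner x z + hinner y z;
  hinner_scal : forall a x y, hinner (hscal a x) y = a * hinner x y;
  hinner_pos : forall x, 0 <= hinner x x;
  hinner_def : forall x, hinner x x = 0 -> x = hzero;
  hcomplete : forall u : nat -> hcar,
    (forall eps, 0 < eps -> exists N, forall m n, (N <= m)%nat -> (N <= n)%nat ->
        sqrt (hinner (hadd (u m) (hopp (u n))) (hadd (u m) (hopp (u n)))) < eps) ->
    exists l, forall eps, 0 < eps -> exists N, forall n, (N <= n)%nat ->
        sqrt (hinner (hadd (u n) (hopp l)) (hadd (u n) (hopp l))) < eps
}.

Section HilbertDefs.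
Context {H : Hilbert}.

Definition hsub (x y : H) : H := hadd H x (hopp H y).
Definition hnorm (x : H) : R := sqrt (hinner H x x).

Definition strong_cv (u : nat -> H) (l : H) : Prop :=
  forall eps, 0 < eps -> exists N, forall n, (N <= n)%nat -> hnorm (hsub (u n) l) < eps.

Definition weak_cv (u : nat -> H) (l : H) : Prop :=
  forall y : H, Un_cv (fun n => hinner H (u n) y) (hinner H l y).

End HilbertDefs.

Inductive Rbar := Fin (r : R) | PInf.

Definition Rbar_le (a b : Rbar) : Prop :=
  match a, b with
  | Fin x, Fin y => x <= y
  | _, PInf => True
  | PInf, Fin _ => False
  end.

Definition Rbar_lt (a b : Rbar) : Prop :=
  match a, b with
  | Fin x, Fin y => x < y
  | Fin _, PInf => True
  | PInf, _ => False
  end.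

Definition Rbar_scal (c : R) (a : Rbar) : Rbar :=
  match a with Fin x => Fin (c * x) | PInf => PInf end.

Definition Rbar_plus_R (a : Rbar) (c : R) : Rbar :=
  match a with Fin x => Fin (x + c) | PInf => PInf end.

Section FunDefs.
Context {H : Hilbert}.
Variable f : H -> Rbar.

Definition proper : Prop := exists x, f x <> PInf.

Definition lsc : Prop :=
  forall (x : H) (c : R), Rbar_lt (Fin c) (f x) ->
    exists delta, 0 < delta /\
      forall y, hnorm (hsub y x) < delta -> Rbar_lt (Fin c) (f y).

Definition f_cv (u : nat -> H) (x : H) : Prop :=
  strong_cv u x /\
  exists v, f x = Fin v /\
    forall eps, 0 < eps -> exists N, forall n, (N <= n)%nat ->
      exists w, f (u n) = Fin w /\ Rabs (w - v) < eps.

Definition frechet_subdiff (x p : H) : Prop :=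
  exists v, f x = Fin v /\
  forall eps, 0 < eps -> exists delta, 0 < delta /\
    forall y, hnorm (hsub y x) < delta ->
      Rbar_le (Fin (v + hinner H p (hsub y x) - eps * hnorm (hsub y x))) (f y).

Definition subdiff (x p : H) : Prop :=
  exists (u : nat -> H) (q : nat -> H),
    f_cv u x /\ (forall n, frechet_subdiff (u n) (q n)) /\ weak_cv q p.

(** lazy slope ||∂f(x)||_- = inf { ||p|| : p ∈ ∂f(x) }, +∞ if ∂f(x) = ∅;
    given as the (functional) relation  is_lazy_slope x s. *)
Definition is_glb (E : R -> Prop) (m : R) : Prop :=
  (forall y, E y -> m <= y) /\ (forall m', (forall y, E y -> m' <= y) -> m' <= m).

Definition is_lazy_slope (x : H) (s : Rbar) : Prop :=
  match s with
  | PInf => forall p, ~ subdiff x p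
  | Fin m => (exists p, subdiff x p) /\ is_glb (fun r => exists p, subdiff x p /\ r = hnorm p) m
  end.

End FunDefs.

Definition desingularizing (eta : R) (phi dphi : R -> R) : Prop :=
  0 < eta /\
  phi 0 = 0 /\
  (forall t, 0 <= t < eta -> 0 <= phi t) /\
  (forall t, 0 <= t < eta -> forall eps, 0 < eps -> exists d, 0 < d /\
     forall s, 0 <= s < eta -> Rabs (s - t) < d -> Rabs (phi s - phi t) < eps) /\
  (forall s t l, 0 <= s < eta -> 0 <= t < eta -> 0 <= l <= 1 ->
     l * phi s + (1 - l) * phi t <= phi (l * s + (1 - l) * t)) /\
  (forall t, 0 < t < eta -> derivable_pt_lim phi t (dphi t)) /\
  (forall t, 0 < t < eta -> forall eps, 0 < eps -> exists d, 0 < d /\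
     forall s, 0 < s < eta -> Rabs (s - t) < d -> Rabs (dphi s - dphi t) < eps) /\
  (forall t, 0 < t < eta -> 0 < dphi t).

Definition KL_at {H : Hilbert} (f : H -> Rbar) (xs : H) (eta : R) (phi dphi : R -> R) : Prop :=
  desingularizing eta phi dphi /\
  exists fs, f xs = Fin fs /\
  exists delta, 0 < delta /\
    forall x v, hnorm (hsub x xs) < delta -> f x = Fin v -> fs < v < fs + eta ->
      forall s, is_lazy_slope f x s -> Rbar_le (Fin 1) (Rbar_scal (dphi (v - fs)) s).

Definition phi_tilde (phi : R -> R) (t : R) : R := Rmax (phi t) (sqrt t).

(* Write t_k = f(x^k) - f(xs) and d_k = |x^{k+1} - x^k|. Far along the sequence, the KŁ
   inequality at x^k, the relative error bound H2 and the concavity of phi turn sufficient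
   decrease H1 into d_k^2 <= M d_{k-1} (phi(t_k) - phi(t_{k+1})), hence by AM-GM
   2 d_k <= d_{k-1} + M (phi(t_k) - phi(t_{k+1})). Telescoping with the triangle inequality
   and passing to the limit gives |xs - x^k| <= d_{k-1} + M phi(t_k) <= d_{k-1} + M phi(t_{k-1}),
   while H1 alone gives d_{k-1} <= sqrt(t_{k-1} / abar). *)

From Stdlib Require Import Reals Lra Psatz Classical.
Open Scope R_scope.

Section HilbertFacts.
Context {H : Hilbert}.

Lemma hscal_0l (x : H) : hscal H 0 x = hzero H.
Proof.
  assert (E : hscal H 0 x = hadd H (hscal H 0 x) (hscal H 0 x)).
  { rewrite <- hscal_distr_r. f_equal. ring. }
  set (s := hscal H 0 x) in *.
  transitivity (hadd H s (hadd H s (hopp H s))).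
  - rewrite hadd_opp, hadd_zero. reflexivity.
  - rewrite hadd_assoc, <- E, hadd_opp. reflexivity.
Qed.

Lemma hinner_0r (y : H) : hinner H y (hzero H) = 0.
Proof. rewrite hinner_sym, <- (hscal_0l y), hinner_scal; ring. Qed.

Lemma hinner_add_r (x y z : H) :
  hinner H x (hadd H y z) = hinner H x y + hinner H x z.
Proof. rewrite hinner_sym, hinner_add; f_equal; apply hinner_sym. Qed.

Lemma hinner_scal_r a (x y : H) : hinner H x (hscal H a y) = a * hinner H x y.
Proof. rewrite hinner_sym, hinner_scal; f_equal; apply hinner_sym. Qed.

Lemma hopp_unique (u w : H) : hadd H u w = hzero H -> w = hopp H u.
Proof.
  intro E. transitivity (hadd H (hadd H (hopp H u) u) w).
  - rewrite (hadd_comm H (hopp H u) u), hadd_opp, hadd_comm, hadd_zero. reflexivity.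
  - rewrite <- hadd_assoc, E, hadd_zero. reflexivity.
Qed.

Lemma hadd_hsub (a b c : H) : hadd H (hsub a b) (hsub b c) = hsub a c.
Proof.
  unfold hsub. rewrite <- hadd_assoc, (hadd_assoc H (hopp H b) b (hopp H c)).
  rewrite (hadd_comm H (hopp H b) b), hadd_opp, (hadd_comm H (hzero H)), hadd_zero.
  reflexivity.
Qed.

Lemma hsub_swap (a b : H) : hsub b a = hopp H (hsub a b).
Proof. apply hopp_unique. rewrite hadd_hsub. apply hadd_opp. Qed.

Lemma hopp_scal (u : H) : hopp H u = hscal H (-1) u.
Proof.
  symmetry; apply hopp_unique.
  rewrite <- (hscal_one H u) at 1. rewrite <- hscal_distr_r.
  replace (1 + -1) with 0 by ring. apply hscal_0l.
Qed.

Lemma hnorm_opp (u : H) : hnorm (hopp H u) = hnorm u.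
Proof. unfold hnorm. rewrite hopp_scal, hinner_scal, hinner_scal_r. f_equal; ring. Qed.

Lemma hnorm_hsub_sym (a b : H) : hnorm (hsub a b) = hnorm (hsub b a).
Proof. rewrite (hsub_swap a b), hnorm_opp. reflexivity. Qed.

Lemma hnorm_ge0 (u : H) : 0 <= hnorm u.
Proof. apply sqrt_pos. Qed.

Lemma hnorm_sqr (u : H) : hnorm u * hnorm u = hinner H u u.
Proof. apply sqrt_sqrt, hinner_pos. Qed.

Lemma hinner_cauchy_schwarz (u w : H) : hinner H u w <= hnorm u * hnorm w.
Proof.
  destruct (Req_dec (hinner H w w) 0) as [E|E].
  { apply hinner_def in E. subst w. rewrite hinner_0r.
    apply Rmult_le_pos; apply hnorm_ge0. }
  set (A := hinner H u u). set (B := hinner H u w). set (C := hinner H w w).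
  assert (Cpos : 0 < C) by (pose proof (hinner_pos H w); unfold C in *; lra).
  (* the quadratic t |-> |u + t w|^2 is nonnegative at its minimiser t = -B/C *)
  assert (Hdisc : B * B <= A * C).
  { pose proof (hinner_pos H (hadd H u (hscal H (- B / C) w))) as P.
    rewrite hinner_add, !hinner_add_r, !hinner_scal, !hinner_scal_r,
      (hinner_sym H w u) in P. fold A B C in P.
    replace (A + -B / C * B + (-B / C * B + -B / C * (-B / C * C)))
      with ((A * C - B * B) / C) in P by (field; lra).
    apply Rmult_le_compat_r with (r := C) in P; [|lra].
    replace ((A * C - B * B) / C * C) with (A * C - B * B) in P by (field; lra).
    lra. }
  apply Rle_trans with (Rabs B); [apply Rle_abs|].
  rewrite <- (Rabs_pos_eq (hnorm u * hnorm w))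
    by (apply Rmult_le_pos; apply hnorm_ge0).
  apply Rsqr_le_abs_0. unfold Rsqr.
  replace (hnorm u * hnorm w * (hnorm u * hnorm w))
    with ((hnorm u * hnorm u) * (hnorm w * hnorm w)) by ring.
  rewrite !hnorm_sqr. exact Hdisc.
Qed.

Lemma hnorm_triangle (u w : H) : hnorm (hadd H u w) <= hnorm u + hnorm w.
Proof.
  rewrite <- (Rabs_pos_eq (hnorm (hadd H u w))) by apply hnorm_ge0.
  rewrite <- (Rabs_pos_eq (hnorm u + hnorm w))
    by (pose proof (hnorm_ge0 u); pose proof (hnorm_ge0 w); lra).
  apply Rsqr_le_abs_0. unfold Rsqr.
  rewrite hnorm_sqr, hinner_add, !hinner_add_r, (hinner_sym H w u).
  pose proof (hinner_cauchy_schwarz u w). pose proof (hnorm_sqr u). pose proof (hnorm_sqr w).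
  nra.
Qed.

Lemma hnorm_hsub_triangle (a b c : H) :
  hnorm (hsub a c) <= hnorm (hsub a b) + hnorm (hsub b c).
Proof. rewrite <- (hadd_hsub a b c); apply hnorm_triangle. Qed.

Lemma strong_cv_hnorm_le (u : nat -> H) (l y : H) (c : R) (N : nat) :
  strong_cv u l -> (forall n, (N <= n)%nat -> hnorm (hsub (u n) y) <= c) ->
  hnorm (hsub l y) <= c.
Proof.
  intros Hcv Hle. apply Rle_plus_epsilon. intros eps Heps.
  destruct (Hcv eps Heps) as [M HM].
  pose proof (HM (M + N)%nat ltac:(lia)) as Hnear.
  rewrite hnorm_hsub_sym in Hnear.
  pose proof (Hle (M + N)%nat ltac:(lia)).
  pose proof (hnorm_hsub_triangle l (u (M + N)%nat) y). lra.
Qed.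

End HilbertFacts.

Definition step_norm {H : Hilbert} (x : nat -> H) (k : nat) : R :=
  hnorm (hsub (x (S k)) (x k)).

Section FiniteLength.
Context {H : Hilbert} (x : nat -> H) (e : nat -> R) (N : nat).
Hypothesis Hstep : forall j, (N <= j)%nat ->
  2 * step_norm x (S j) <= step_norm x j + (e (S j) - e (S (S j))).

Lemma step_chain_bound j n : (N <= j)%nat ->
  hnorm (hsub (x (S (n + S j))) (x (S j))) + step_norm x (n + S j)
    <= step_norm x j + (e (S j) - e (S (n + S j))).
Proof.
  intro Hj. induction n as [|n IH].
  - pose proof (Hstep j Hj). unfold step_norm in *. simpl. lra.
  - replace (S n + S j)%nat with (S (n + S j)) by lia.
    set (m := (n + S j)%nat) in *.
    pose proof (hnorm_hsub_triangle (x (S (S m))) (x (S m)) (x (S j))).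
    pose proof (Hstep m ltac:(lia)). unfold step_norm in *. lra.
Qed.

Lemma tail_distance_bound (xs : H) : strong_cv x xs ->
  (forall j, (N <= j)%nat -> 0 <= e j) ->
  forall j, (N <= j)%nat -> hnorm (hsub xs (x (S j))) <= step_norm x j + e (S j).
Proof.
  intros Hcv He j Hj.
  apply (strong_cv_hnorm_le x xs (x (S j)) _ (S (S j)) Hcv).
  intros n Hn. replace n with (S ((n - S (S j)) + S j)) by lia.
  pose proof (step_chain_bound j (n - S (S j)) Hj).
  pose proof (hnorm_ge0 (hsub (x (S (n - S (S j) + S j))) (x (n - S (S j) + S j)))).
  pose proof (He (S (n - S (S j) + S j)) ltac:(lia)).
  unfold step_norm in *. lra.
Qed.

End FiniteLength.

Section Desingularizing.
Variables (eta : R) (phi dphi : R -> R).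
Hypothesis Hdes : desingularizing eta phi dphi.

Lemma desingularizing_tangent t s : 0 < t < eta -> 0 <= s < eta ->
  phi s <= phi t + dphi t * (s - t).
Proof.
  destruct Hdes as [_ [_ [_ [_ [Hconc [Hder _]]]]]]. intros Ht Hs.
  destruct (Req_dec s t) as [->|Hst]; [lra|].
  apply Rnot_lt_le; intro Hlt.
  set (g := phi s - phi t - dphi t * (s - t)).
  assert (gpos : 0 < g) by (unfold g; lra).
  assert (Habs : 0 < Rabs (s - t)) by (apply Rabs_pos_lt; lra).
  destruct (Hder t Ht (g / (2 * Rabs (s - t)))) as [dl Hdl].
  { apply Rdiv_lt_0_compat; lra. }
  pose proof (cond_pos dl) as dlpos.
  (* a chord from t towards s, short enough for the difference quotient to be g/(2|s-t|)-close to dphi t *)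
  set (lam := Rmin (1/2) (dl / (2 * Rabs (s - t)))).
  assert (lpos : 0 < lam).
  { apply Rmin_glb_lt; [lra|]. apply Rdiv_lt_0_compat; lra. }
  assert (l1 : lam <= 1/2) by apply Rmin_l.
  assert (l2 : lam <= dl / (2 * Rabs (s - t))) by apply Rmin_r.
  set (h := lam * (s - t)).
  assert (h0 : h <> 0).
  { unfold h. intro E. apply Rmult_integral in E. destruct E; lra. }
  assert (hl : lam * Rabs (s - t) <= dl / 2).
  { apply Rle_trans with (dl / (2 * Rabs (s - t)) * Rabs (s - t)).
    - apply Rmult_le_compat_r; lra.
    - right. field. lra. }
  assert (ha : Rabs h < dl).
  { unfold h. rewrite Rabs_mult, (Rabs_pos_eq lam) by lra. lra. }
  specialize (Hdl h h0 ha).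
  pose proof (Hconc s t lam Hs ltac:(lra) ltac:(lra)) as Chord.
  replace (lam * s + (1 - lam) * t) with (t + h) in Chord by (unfold h; ring).
  set (q := (phi (t + h) - phi t) / h) in *.
  assert (Eq : phi (t + h) - phi t = q * h) by (unfold q; field; exact h0).
  assert (E3 : phi s - phi t <= q * (s - t)).
  { apply (Rmult_le_reg_l lam); [lra|].
    assert (lam * (phi s - phi t) <= q * h) by lra.
    unfold h in *. lra. }
  assert (E1 : (q - dphi t) * (s - t) <= Rabs (q - dphi t) * Rabs (s - t)).
  { rewrite <- Rabs_mult. apply Rle_abs. }
  assert (E2 : Rabs (q - dphi t) * Rabs (s - t) < g / 2).
  { apply Rlt_le_trans with (g / (2 * Rabs (s - t)) * Rabs (s - t)).
    - apply Rmult_lt_compat_r; lra.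
    - right. field. lra. }
  unfold g in *. nra.
Qed.

Lemma desingularizing_le s t : 0 <= s <= t -> t < eta -> phi s <= phi t.
Proof.
  intros Hs Ht. destruct (Req_dec t 0) as [E|E].
  { replace s with t by lra. lra. }
  pose proof (desingularizing_tangent t s ltac:(lra) ltac:(lra)).
  destruct Hdes as [_ [_ [_ [_ [_ [_ [_ Hpos]]]]]]].
  pose proof (Hpos t ltac:(lra)). nra.
Qed.

End Desingularizing.

Section LazySlope.
Context {H : Hilbert} (f : H -> Rbar).

Lemma lazy_slope_exists (y : H) : exists s, is_lazy_slope f y s.
Proof.
  destruct (classic (exists p, subdiff f y p)) as [[p Hp]|Hn].
  - set (E := fun r => exists q, subdiff f y q /\ r = hnorm q).
    (* the infimum of E is minus the supremum of -E *)
    destruct (completeness (fun r => E (- r))) as [m [Hub Hlub]].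
    + exists 0. intros r [q [_ Hq]]. pose proof (hnorm_ge0 q). lra.
    + exists (- hnorm p). exists p. split; [exact Hp|ring].
    + exists (Fin (- m)). simpl. split; [exists p; exact Hp|]. split.
      * intros r Hr. assert (E (- - r)) by (rewrite Ropp_involutive; exact Hr).
        pose proof (Hub (- r) H0). lra.
      * intros m' Hm'. assert (m <= - m'); [|lra].
        apply Hlub. intros r Hr. pose proof (Hm' _ Hr). lra.
  - exists PInf. simpl. intros p Hp. apply Hn. exists p; exact Hp.
Qed.

Lemma lazy_slope_ge0 (y : H) (m : R) : is_lazy_slope f y (Fin m) -> 0 <= m.
Proof. intros [_ [_ Hglb]]. apply Hglb. intros r [p [_ ->]]. apply hnorm_ge0. Qed.

Lemma kl_relative_error_bound (y : H) (D c r : R) : 0 < c ->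
  (forall s, is_lazy_slope f y s -> Rbar_le (Fin 1) (Rbar_scal D s)) ->
  (forall s, is_lazy_slope f y s -> Rbar_le (Rbar_scal c s) (Fin r)) ->
  c <= D * r.
Proof.
  intros Hc Hkl Hrel. destruct (lazy_slope_exists y) as [[m|] Hs].
  - pose proof (lazy_slope_ge0 y m Hs). specialize (Hkl _ Hs). specialize (Hrel _ Hs).
    simpl in Hkl, Hrel.
    assert (Dpos : 0 < D) by nra.
    assert (c * 1 <= c * (D * m)) by (apply Rmult_le_compat_l; lra).
    assert (D * (c * m) <= D * r) by (apply Rmult_le_compat_l; lra).
    nra.
  - exact (False_ind _ (Hrel _ Hs)).
Qed.

End LazySlope.

(* The junk value 0 at [PInf] is never used: the sequences below are finite-valued from some index on. *)
Definition Rbar_fin (a : Rbar) : R := match a with Fin r => r | PInf => 0 end.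

Lemma nonincreasing_tail_ge_limit (u : nat -> R) (l : R) (N : nat) :
  Un_cv u l -> (forall k, (N <= k)%nat -> u (S k) <= u k) ->
  forall k, (N <= k)%nat -> l <= u k.
Proof.
  intros Hcv Hdec k Hk. replace k with ((k - N) + N)%nat by lia.
  apply (decreasing_ineq (fun n => u (n + N)%nat)); [|exact (CV_shift' u N l Hcv)].
  intro n. apply Hdec. lia.
Qed.

Lemma two_mul_le_add_of_sqr_le_mul (c p q : R) :
  0 <= p -> 0 <= q -> c ^ 2 <= p * q -> 2 * c <= p + q.
Proof. intros Hp Hq Hc. pose proof (pow2_ge_0 (p - q)). nra. Qed.

(* The hypotheses give [dk^2 <= M dj Del], which AM-GM linearises. *)
Lemma descent_step_bound (a b M D gap Del dk dj : R) :
  0 < a -> 0 < b -> 1 <= M * (a * b) -> 0 <= dj -> 0 <= D ->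
  a * dk ^ 2 <= gap -> D * gap <= Del -> b <= D * dj ->
  2 * dk <= dj + M * Del.
Proof.
  intros Ha Hb HM Hdj HD Hgap HDel Hrel.
  assert (Mpos : 0 < M).
  { destruct (Rle_lt_dec M 0) as [HM0|]; [|assumption].
    assert (0 < a * b) by nra. nra. }
  assert (Hadk : 0 <= a * dk ^ 2) by (pose proof (pow2_ge_0 dk); nra).
  assert (Delpos : 0 <= Del) by nra.
  apply two_mul_le_add_of_sqr_le_mul; [lra|nra|].
  assert (H1 : dk ^ 2 <= M * (a * b) * dk ^ 2) by (pose proof (pow2_ge_0 dk); nra).
  assert (H2 : b * (a * dk ^ 2) <= D * dj * (a * dk ^ 2)) by nra.
  assert (H3 : D * (a * dk ^ 2) <= Del) by nra.
  assert (H4 : M * (b * (a * dk ^ 2)) <= M * (dj * (D * (a * dk ^ 2)))).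
  { apply Rmult_le_compat_l; nra. }
  assert (H5 : M * (dj * (D * (a * dk ^ 2))) <= M * (dj * Del)).
  { apply Rmult_le_compat_l; [lra|]. apply Rmult_le_compat_l; lra. }
  nra.
Qed.

Lemma f_cv_Un_cv {H : Hilbert} (f : H -> Rbar) (x : nat -> H) (xs : H) (fs : R) :
  f_cv f x xs -> f xs = Fin fs -> Un_cv (fun k => Rbar_fin (f (x k))) fs.
Proof.
  intros [_ [v [Hv Hcv]]] Hfs eps Heps. rewrite Hfs in Hv. injection Hv as <-.
  destruct (Hcv eps Heps) as [N HN]. exists N. intros n Hn.
  destruct (HN n ltac:(lia)) as [w [Hw Hlt]]. unfold R_dist. rewrite Hw. exact Hlt.
Qed.

Lemma f_cv_eventually_finite {H : Hilbert} (f : H -> Rbar) (x : nat -> H) (xs : H) :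
  f_cv f x xs -> exists N, forall k, (N <= k)%nat -> f (x k) = Fin (Rbar_fin (f (x k))).
Proof.
  intros [_ [v [_ Hcv]]]. destruct (Hcv 1 Rlt_0_1) as [N HN]. exists N. intros k Hk.
  destruct (HN k Hk) as [w [Hw _]]. rewrite Hw. reflexivity.
Qed.

Section KLTail.
Context {H : Hilbert} (f : H -> Rbar) (x : nat -> H) (a b : nat -> R) (abar M : R)
  (xs : H) (fs eta delta : R) (phi dphi : R -> R) (N : nat).

Let t k := Rbar_fin (f (x k)) - fs.

Hypothesis Ha : forall k, 0 < a k.
Hypothesis Hsuff : forall k,
  Rbar_le (Rbar_plus_R (f (x (S k))) (a k * (hnorm (hsub (x (S k)) (x k)))^2)) (f (x k)).
Hypothesis Hb : forall k, 0 < b (S k).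
Hypothesis Hrel : forall k s, is_lazy_slope f (x (S k)) s ->
  Rbar_le (Rbar_scal (b (S k)) s) (Fin (hnorm (hsub (x (S k)) (x k)))).
Hypothesis Habar : 0 < abar.
Hypothesis Habar_le : forall k, abar <= a k.
Hypothesis HM : forall k, (1 <= k)%nat -> / (a k * b k) <= M.
Hypothesis Hcv : strong_cv x xs.
Hypothesis Hdes : desingularizing eta phi dphi.
Hypothesis Hkl : forall y v, hnorm (hsub y xs) < delta -> f y = Fin v -> fs < v < fs + eta ->
  forall s, is_lazy_slope f y s -> Rbar_le (Fin 1) (Rbar_scal (dphi (v - fs)) s).
Hypothesis Hfin : forall k, (N <= k)%nat -> f (x k) = Fin (Rbar_fin (f (x k))).
Hypothesis Hrange : forall k, (N <= k)%nat -> 0 <= t k < eta.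
Hypothesis Hnear : forall k, (N <= k)%nat -> hnorm (hsub (x k) xs) < delta.

Lemma one_le_M_mul k : (1 <= k)%nat -> 1 <= M * (a k * b k).
Proof.
  intro Hk. destruct k as [|j]; [lia|].
  pose proof (Ha (S j)). pose proof (Hb j). pose proof (HM (S j) Hk) as Hinv.
  apply (Rmult_le_compat_r (a (S j) * b (S j))) in Hinv; [|nra].
  rewrite Rinv_l in Hinv by nra. lra.
Qed.

Lemma sufficient_decrease_tail k : (N <= k)%nat ->
  a k * step_norm x k ^ 2 <= t k - t (S k).
Proof.
  intro Hk. pose proof (Hsuff k) as P.
  rewrite (Hfin k Hk), (Hfin (S k) ltac:(lia)) in P. unfold t, step_norm. simpl in P. lra.
Qed.

Lemma kl_descent j : (N <= j)%nat ->
  2 * step_norm x (S j) <= step_norm x j + M * (phi (t (S j)) - phi (t (S (S j)))).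
Proof.
  intro Hj. set (k := S j).
  pose proof (sufficient_decrease_tail k ltac:(lia)) as Hdec.
  pose proof (Hrange k ltac:(lia)). pose proof (Hrange (S k) ltac:(lia)).
  pose proof (hnorm_ge0 (hsub (x (S j)) (x j))) as Hdj.
  pose proof (Ha k). pose proof (pow2_ge_0 (step_norm x k)).
  assert (0 <= a k * step_norm x k ^ 2) by (apply Rmult_le_pos; lra).
  destruct (Req_dec (t k) 0) as [Ht0|Ht0].
  - assert (t (S k) = t k) as -> by lra.
    assert (Hsq : step_norm x k ^ 2 = 0).
    { apply Rle_antisym; [|lra].
      apply (Rmult_le_reg_l (a k)); lra. }
    assert (step_norm x k = 0) as ->.
    { apply NNPP. intro Hne. exact (pow_nonzero _ 2 Hne Hsq). }
    unfold step_norm in *. lra.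
  - assert (Hrel_k : b k <= dphi (t k) * step_norm x j).
    { apply (kl_relative_error_bound f (x k)); [apply Hb| |apply Hrel].
      apply (Hkl (x k) (Rbar_fin (f (x k)))); [apply Hnear; lia|apply Hfin; lia|].
      unfold t in *. lra. }
    destruct Hdes as [_ [_ [_ [_ [_ [_ [_ Hdpos]]]]]]].
    pose proof (desingularizing_tangent eta phi dphi Hdes (t k) (t (S k)) ltac:(lra) ltac:(lra)).
    apply (descent_step_bound (a k) (b k) M (dphi (t k)) (t k - t (S k))).
    + assumption.
    + apply Hb.
    + apply one_le_M_mul. lia.
    + apply hnorm_ge0.
    + apply Rlt_le, Hdpos. lra.
    + exact Hdec.
    + lra.
    + exact Hrel_k.
Qed.

Lemma step_le_sqrt j : (N <= j)%nat -> step_norm x j <= / sqrt abar * sqrt (t j).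
Proof.
  intro Hj. pose proof (sufficient_decrease_tail j Hj). pose proof (Hrange (S j) ltac:(lia)).
  pose proof (Habar_le j). pose proof (pow2_ge_0 (step_norm x j)).
  assert (Hsq : step_norm x j ^ 2 <= t j / abar).
  { apply (Rmult_le_reg_l abar); [lra|]. field_simplify; nra. }
  rewrite <- (sqrt_pow2 (step_norm x j)) by apply hnorm_ge0.
  replace (/ sqrt abar * sqrt (t j)) with (sqrt (t j) / sqrt abar) by (unfold Rdiv; ring).
  rewrite <- sqrt_div_alt by lra. apply sqrt_le_1_alt, Hsq.
Qed.

Lemma distance_to_limit_le j : (N <= j)%nat ->
  hnorm (hsub xs (x (S j))) <= (/ sqrt abar + M) * phi_tilde phi (t j).
Proof.
  intro Hj.
  assert (Mpos : 0 < M).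
  { pose proof (one_le_M_mul 1 (le_n 1)).
    assert (0 < a 1%nat * b 1%nat) by (apply Rmult_lt_0_compat; [apply Ha|apply (Hb 0)]).
    destruct (Rle_lt_dec M 0); [nra|assumption]. }
  destruct Hdes as [_ [_ [Hphi_ge0 _]]].
  assert (Hstep : forall i, (N <= i)%nat ->
    2 * step_norm x (S i) <= step_norm x i + (M * phi (t (S i)) - M * phi (t (S (S i))))).
  { intros i Hi. rewrite <- Rmult_minus_distr_l. exact (kl_descent i Hi). }
  pose proof (tail_distance_bound x (fun k => M * phi (t k)) N Hstep xs Hcv) as Htail.
  assert (Hphi : phi (t (S j)) <= phi (t j)).
  { pose proof (sufficient_decrease_tail j Hj). pose proof (Ha j).
    pose proof (pow2_ge_0 (step_norm x j)). pose proof (Hrange j Hj).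
    pose proof (Hrange (S j) ltac:(lia)).
    apply (desingularizing_le eta phi dphi Hdes); nra. }
  pose proof (Htail (fun k Hk => Rmult_le_pos _ _ (Rlt_le _ _ Mpos) (Hphi_ge0 _ (Hrange k Hk)))
                    j Hj) as Hbound.
  pose proof (step_le_sqrt j Hj).
  assert (0 < / sqrt abar) by (apply Rinv_0_lt_compat, sqrt_lt_R0, Habar).
  unfold phi_tilde. pose proof (Rmax_l (phi (t j)) (sqrt (t j))).
  pose proof (Rmax_r (phi (t j)) (sqrt (t j))).
  simpl in Hbound. nra.
Qed.

End KLTail.

Theorem mainTheorem4 (H : Hilbert) (f : H -> Rbar)
  (x : nat -> H) (a b : nat -> R) (abar : R) (xs : H)
  (eta : R) (phi dphi : R -> R) :
  proper f -> lsc f ->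
  (forall k, 0 < a k) ->
  (forall k, Rbar_le (Rbar_plus_R (f (x (S k))) (a k * (hnorm (hsub (x (S k)) (x k)))^2)) (f (x k))) ->
  (forall k, 0 < b (S k)) ->
  (forall k s, is_lazy_slope f (x (S k)) s ->
     Rbar_le (Rbar_scal (b (S k)) s) (Fin (hnorm (hsub (x (S k)) (x k))))) ->
  0 < abar -> (forall k, abar <= a k) ->
  ~ (exists l, Un_cv (fun n => sum_f_R0 (fun i => Rabs (b i)) n) l) ->
  (exists M, forall k, (1 <= k)%nat -> / (a k * b k) <= M) ->
  f_cv f x xs ->
  KL_at f xs eta phi dphi ->
  exists C K, forall k, (K <= k)%nat -> (1 <= k)%nat ->
    exists v fs, f (x (k - 1)%nat) = Fin v /\ f xs = Fin fs /\
      hnorm (hsub xs (x k)) <= C * phi_tilde phi (v - fs).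
Proof.
  intros _ _ Ha Hsuff Hb Hrel Habar Habar_le _ [M HM] Hfcv
    [Hdes [fs [Hfs [delta [Hdelta Hkl]]]]].
  set (fv k := Rbar_fin (f (x k))).
  pose proof (f_cv_Un_cv f x xs fs Hfcv Hfs) as Hlim.
  destruct (f_cv_eventually_finite f x xs Hfcv) as [N1 Hfin].
  destruct (Hlim eta (proj1 Hdes)) as [N2 Hclose].
  destruct (proj1 Hfcv delta Hdelta) as [N3 Hnear].
  assert (Hmono : forall k, (N1 <= k)%nat -> fv (S k) <= fv k).
  { intros k Hk. pose proof (Hsuff k) as P.
    rewrite (Hfin k Hk), (Hfin (S k) ltac:(lia)) in P. simpl in P.
    pose proof (Ha k). pose proof (pow2_ge_0 (hnorm (hsub (x (S k)) (x k)))).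
    fold (fv k) (fv (S k)) in P. nra. }
  pose proof (nonincreasing_tail_ge_limit fv fs N1 Hlim Hmono) as Hge.
  set (N := (N1 + N2 + N3)%nat).
  exists (/ sqrt abar + M), (S N). intros k Hk _.
  destruct k as [|j]; [lia|]. replace (S j - 1)%nat with j by lia.
  exists (fv j), fs. split; [apply Hfin; lia|]. split; [exact Hfs|].
  apply (distance_to_limit_le f x a b abar M xs fs eta delta phi dphi N
           Ha Hsuff Hb Hrel Habar Habar_le HM (proj1 Hfcv) Hdes Hkl).
  - intros i Hi. apply Hfin. lia.
  - intros i Hi. pose proof (Hge i ltac:(lia)) as Hlow.
    pose proof (Hclose i ltac:(lia)) as Hd. unfold Rdist in Hd.
    apply Rabs_def2 in Hd. unfold fv in Hlow. lra.
  - intros i Hi. apply Hnear. lia.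
  - lia.
Qed.
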